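(* Let $\mathcal{E}:\mathcal{S}(\mathcal{H}_1)\otimes\mathcal{S}(\mathcal{H}_2)\to\mathcal{S}(\mathcal{H}_1)$, with $\mathcal{H}_1$ the space of $n$ qubits, be any channel that commutes with the dephasing map, $\mathcal{E}\circ\Delta=\Delta\circ\mathcal{E}$, where $\Delta(\rho)=\sum_x|x\rangle\langle x|\rho|x\rangle\langle x|$. For a state $\tau\in\mathcal{S}(\mathcal{H}_2)$ define $\mathcal{E}_\tau(\rho):=\mathcal{E}(\rho\otimes\tau)$. Then for all states $\tau$, $\mathcal{D}\big(\mathcal{E}_\tau,H^{\otimes n}\big)\ge 1-\frac{1}{2^n}$.
   Context: $\mathcal{D}$ is the induced trace distance on channels, $\mathcal{D}(\mathcal{E},\mathcal{V})=\max_\rho\tfrac12\|\mathcal{E}(\rho)-\mathcal{V}(\rho)\|_1$, and $H^{\otimes n}$ denotes the channel $\rho\mapsto H^{\otimes n}\rho H^{\otimes n}$. *)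

From HB Require Import structures.
From mathcomp Require Import all_boot all_order all_algebra.
From mathcomp Require Import mxtens.
Set Implicit Arguments. Unset Strict Implicit. Unset Printing Implicit Defensive.
Import Order.TTheory GRing.Theory Num.Theory.
Local Open Scope ring_scope.

Section QDefs.
Context {C : numClosedFieldType}.

Definition dagger {p q : nat} (A : 'M[C]_(p, q)) : 'M[C]_(q, p) :=
  (map_mx Num.conj A)^T.

Definition psdmx {d : nat} (A : 'M[C]_d) : Prop :=
  A \is hermsymmx /\
  forall v : 'rV[C]_d, 0 <= (v *m A *m dagger v) ord0 ord0.

Definition is_state {d : nat} (rho : 'M[C]_d) : Prop :=
  psdmx rho /\ \tr rho = 1.

(* ampliation  Phi (x) id_k  : 'M_(a*k) -> 'M_(b*k), with the tensor index
   convention of mxtens (index (i,p) of 'I_(a*k) is i*k+p). *)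
Definition ampl {a b : nat} (Phi : 'M[C]_a -> 'M[C]_b) (k : nat)
  (X : 'M[C]_(a * k)) : 'M[C]_(b * k) :=
  \matrix_(i, j)
    Phi (\matrix_(i', j') X (mxtens_index (i', (mxtens_unindex i).2))
                            (mxtens_index (j', (mxtens_unindex j).2)))
        (mxtens_unindex i).1 (mxtens_unindex j).1.

Definition completely_positive {a b : nat} (Phi : 'M[C]_a -> 'M[C]_b) : Prop :=
  forall (k : nat) (X : 'M[C]_(a * k)), psdmx X -> psdmx (ampl Phi X).

Definition trace_preserving {a b : nat} (Phi : 'M[C]_a -> 'M[C]_b) : Prop :=
  forall X : 'M[C]_a, \tr (Phi X) = \tr X.

Definition is_channel {a b : nat} (Phi : 'M[C]_a -> 'M[C]_b) : Prop :=
  linear Phi /\ completely_positive Phi /\ trace_preserving Phi.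

Definition dephase {d : nat} (X : 'M[C]_d) : 'M[C]_d :=
  \matrix_(i, j) (if i == j then X i j else 0).

Definition dephase_first {a k : nat} (X : 'M[C]_(a * k)) : 'M[C]_(a * k) :=
  \matrix_(i, j)
    (if (mxtens_unindex i).1 == (mxtens_unindex j).1 then X i j else 0).

(* trace norm ||A||_1 = tr sqrt(A^dagger A) = sum of the square roots of the
   eigenvalues of the positive semidefinite matrix A^dagger A *)
Definition trace_norm {d : nat} (A : 'M[C]_d) : C :=
  \sum_(i < d) sqrtC (spectral_diag (dagger A *m A) ord0 i).

Definition trace_dist {d : nat} (A B : 'M[C]_d) : C := trace_norm (A - B) / 2.

Definition hadamard1 : 'M[C]_2 :=
  (sqrtC 2)^-1 *: \matrix_(i, j)
     (if (i == 1 :> 'I_2) && (j == 1 :> 'I_2) then -1 else 1).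

Definition hadamard (n : nat) : 'M[C]_(2 ^ n) := ntensmx hadamard1 n.

End QDefs.

(* Take rho = |0><0|.  As rho (x) tau is invariant under dephasing of the
   first factor, sigma := E(rho (x) tau) is diagonal with unit trace, whereas
   H rho H is the projector P = J / 2^n onto the uniform superposition.  The
   reflection W = 1 - 2P is unitary, so ||sigma - P||_1 is at least
   Re tr((sigma - P)^* W) = 2 - 2 / 2^n, the overlap of the diagonal sigma
   with P being tr(sigma P) = 1 / 2^n. *)

From mathcomp Require Import all_boot all_order all_algebra.
From mathcomp Require Import mxtens sesquilinear spectral ring.
Set Implicit Arguments. Unset Strict Implicit. Unset Printing Implicit Defensive.
Import Order.TTheory GRing.Theory Num.Theory.
Local Open Scope ring_scope.

Section PzRingMatrix.
Variable R : pzRingType.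

Lemma mxtrace_tensmx m n (A : 'M[R]_m) (B : 'M[R]_n) :
  \tr (tensmx A B) = \tr A * \tr B.
Proof. by rewrite /mxtrace mulr_sum; apply: eq_bigr => k _; rewrite mxE. Qed.

Lemma ntensmx_rec_border m n (A : 'M[R]_(m, n)) (c : R) :
  (forall (i : 'I_m) (j : 'I_n),
     (i == 0 :> nat) || (j == 0 :> nat) -> A i j = c) ->
  forall k (i : 'I_(m ^ k.+1)) (j : 'I_(n ^ k.+1)),
    (i == 0 :> nat) || (j == 0 :> nat) -> ntensmx_rec A k i j = c ^+ k.+1.
Proof.
move=> A_border; elim=> [|k IHk] i j ij0 /=; first by rewrite A_border ?expr1.
rewrite mxE A_border ?IHk -?exprS //=;
  by case/orP: ij0 => /eqP ->; rewrite ?mod0n ?div0n ?orbT.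
Qed.

Lemma mulmx_delta_entry m n q p (A : 'M[R]_(m, n)) (B : 'M[R]_(q, p)) i j k l :
  (A *m delta_mx i j *m B) k l = A k i * B j l.
Proof.
rewrite -(mul_delta_mx (0 : 'I_1)) mulmxA -colE -mulmxA -rowE.
by rewrite mxE big_ord1 !mxE.
Qed.

Lemma mxtrace_delta_mx d (i : 'I_d) : \tr (delta_mx i i : 'M[R]_d) = 1.
Proof.
rewrite /mxtrace (bigD1 i) //= big1 => [|j ji]; first by rewrite mxE eqxx addr0.
by rewrite mxE (negbTE ji).
Qed.

End PzRingMatrix.

Section TraceNorm.
Context {C : numClosedFieldType}.
Local Open Scope sesquilinear_scope.

Lemma daggerE p q (A : 'M[C]_(p, q)) : dagger A = A^t*.
Proof. by rewrite /dagger map_trmx. Qed.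

Lemma mulmx_adj_entry p q d (A : 'M[C]_(p, d)) (B : 'M[C]_(q, d)) i j :
  (A *m B^t*) i j = dotmx (row i A) (row j B).
Proof.
rewrite dotmxE !mxE; apply: eq_bigr => k _; rewrite !mxE.
by congr (_ * _); apply: eq_bigr => l _; rewrite !mxE.
Qed.

Lemma dotmx_mulmx_adj p d (u : 'rV[C]_p) (v : 'rV[C]_d) (M : 'M[C]_(p, d)) :
  dotmx (u *m M) v = dotmx u (v *m M^t*).
Proof. by rewrite !dotmxE trmx_mul map_mxM trmxCK mulmxA. Qed.

Lemma spectral_diag_gram d (A : 'M[C]_d) i
    (P := spectralmx (A^t* *m A)) :
  spectral_diag (A^t* *m A) 0 i = dotmx (row i P *m A^t*) (row i P *m A^t*).
Proof.
have normal_gram : A^t* *m A \is normalmx.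
  by apply/normalmxP; rewrite trmx_mul map_mxM trmxCK.
have P_unitary : P \is unitarymx by exact: spectral_unitarymx.
move/orthomx_spectralP: normal_gram; rewrite invmx_unitary // -/P => gramE.
have : P *m (A^t* *m A) *m P^t* = diag_mx (spectral_diag (A^t* *m A)).
  by rewrite {1}gramE !mulmxA (unitarymxP P_unitary) mul1mx mulmxtVK.
move/matrixP/(_ i i); rewrite [diag_mx _ _ _]mxE eqxx mulr1n => <-.
by rewrite mulmx_adj_entry !row_mul mulmxA dotmx_mulmx_adj.
Qed.

(* In the eigenbasis of A^* A, each diagonal term of tr(A^* W) is a
   Cauchy-Schwarz pairing of a vector of squared norm mu_i with a unit
   vector. *)
Lemma Re_trace_unitary_le_trace_norm d (A W : 'M[C]_d) :
  W \is unitarymx -> 'Re (\tr (dagger A *m W)) <= trace_norm A.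
Proof.
move=> W_unitary; rewrite /trace_norm !daggerE.
set P := spectralmx (A^t* *m A).
have P_unitary : P \is unitarymx by exact: spectral_unitarymx.
have -> : \tr (A^t* *m W) =
    \sum_i dotmx (row i P *m A^t*) (row i P *m W^t*).
  rewrite -[A^t* *m W]mul1mx -(mulmxKtV 1%:M P_unitary) // mul1mx.
  rewrite -mulmxA mxtrace_mulC mulmxA; apply: eq_bigr => i _.
  by rewrite mulmx_adj_entry !row_mul dotmx_mulmx_adj.
rewrite raddf_sum /=; apply: ler_sum => i _; rewrite spectral_diag_gram.
set u := row i P *m A^t*; set v := row i P *m W^t*.
have v_unit : dotmx v v = 1.
  rewrite /v dotmx_mulmx_adj trmxCK mulmxKtV //.
  by rewrite -mulmx_adj_entry (unitarymxP P_unitary) mxE eqxx.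
apply: le_trans (leif_Re_Creal _).1 _.
have : `|dotmx u v| <= sqrtC (dotmx u u) * sqrtC (dotmx v v).
  exact: (CauchySchwarz_sqrt (@dotmx _ d) u v).
by rewrite v_unit sqrtC1 mulr1.
Qed.

End TraceNorm.

Section PlusState.
Context {C : numClosedFieldType}.
Local Open Scope sesquilinear_scope.

Lemma adjmx_reflection d (Q : 'M[C]_d) :
  Q^t* = Q -> Q *m Q = Q -> 1%:M - 2%:R *: Q \is unitarymx.
Proof.
move=> Q_herm Q_idem; apply/unitarymxP.
have -> : (1%:M - 2%:R *: Q)^t* = 1%:M - 2%:R *: Q.
  rewrite -[in RHS]Q_herm; apply/matrixP => i j.
  by rewrite !mxE rmorphB rmorphM /= !rmorph_nat eq_sym.
rewrite mulmxBl !mulmxBr !mul1mx mulmx1 -scalemxAl -scalemxAr Q_idem scalerA.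
by apply/matrixP => i j; rewrite !mxE; ring.
Qed.

Definition plus_state d : 'M[C]_d := d%:R^-1 *: const_mx 1.

Lemma plus_state_adj d : (plus_state d)^t* = plus_state d.
Proof.
apply/matrixP => i j; rewrite !mxE rmorphM rmorph1 /=.
by rewrite conj_Creal // realV realn.
Qed.

Section Positive.
Variables (d : nat) (d_gt0 : (0 < d)%N).

Let d_neq0 : d%:R != 0 :> C. Proof. by rewrite pnatr_eq0 -lt0n. Qed.

Lemma plus_state_idem : plus_state d *m plus_state d = plus_state d.
Proof.
apply/matrixP => i j; rewrite !mxE.
under eq_bigr do rewrite !mxE !mulr1.
by rewrite sumr_const card_ord -mulrnAr -[d%:R^-1 *+ d]mulr_natr mulVf.
Qed.

Lemma mxtrace_plus_state : \tr (plus_state d) = 1.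
Proof.
rewrite /mxtrace; under eq_bigr do rewrite !mxE mulr1.
by rewrite sumr_const card_ord -[d%:R^-1 *+ d]mulr_natr mulVf.
Qed.

Lemma mxtrace_diag_mul_plus_state (A : 'M[C]_d) :
  is_diag_mx A -> \tr (A *m plus_state d) = d%:R^-1 * \tr A.
Proof.
move=> /is_diag_mxP A_diag; rewrite -scalemxAr linearZ; congr (_ * _).
apply: eq_bigr => i _; rewrite !mxE (bigD1 i) //= big1 ?addr0 => [|j ji].
  by rewrite mxE mulr1.
by rewrite A_diag ?mul0r // eq_sym.
Qed.

Lemma trace_dist_diag_plus_state (sigma : 'M[C]_d) :
  is_diag_mx sigma -> \tr sigma = 1 ->
  1 - d%:R^-1 <= trace_dist sigma (plus_state d).
Proof.
move=> sigma_diag tr_sigma.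
have adj_diag : is_diag_mx (sigma^t*).
  move/is_diag_mxP: sigma_diag => sigma_offdiag; apply/is_diag_mxP => i j ij.
  by rewrite !mxE sigma_offdiag ?conjC0 // eq_sym.
have tr_adj : \tr (sigma^t*) = 1.
  by rewrite trace_map_mx mxtrace_tr tr_sigma rmorph1.
have tr_reflect : \tr (dagger (sigma - plus_state d) *m
                      (1%:M - 2%:R *: plus_state d)) = (1 - d%:R^-1) * 2.
  rewrite daggerE [(_ - _)^T]linearB /= map_mxB plus_state_adj.
  rewrite mulmxBl !mulmxBr !mulmx1.
  rewrite -!(scalemxAr 2%:R) plus_state_idem !raddfB /= !(mxtraceZ 2%:R).
  rewrite mxtrace_diag_mul_plus_state // tr_adj mxtrace_plus_state; ring.
rewrite /trace_dist ler_pdivlMr ?ltr0n //.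
apply: le_trans (Re_trace_unitary_le_trace_norm _
  (adjmx_reflection (plus_state_adj d) plus_state_idem)).
have val_real : (1 - d%:R^-1) * 2 \is @Num.real C.
  by rewrite rpredM ?rpredB ?rpredV ?realn ?rpred1.
by rewrite tr_reflect (Creal_ReP _ val_real).
Qed.

End Positive.
End PlusState.

Section Qubits.
Context {C : numClosedFieldType}.
Local Open Scope sesquilinear_scope.

Lemma hadamard_border n (i j : 'I_(2 ^ n)) :
  (i == 0 :> nat) || (j == 0 :> nat) -> hadamard n i j = (sqrtC 2)^-1 ^+ n :> C.
Proof.
case: n i j => [|n] i j ij0; first by rewrite /hadamard /= !ord1 mxE.
apply: ntensmx_rec_border ij0 => a b ab0; rewrite !mxE.
by case/orP: ab0 => /eqP ab0; rewrite -!val_eqE /= ab0 ?andbF mulr1.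
Qed.

Lemma hadamard_conj_basis0 n (z : 'I_(2 ^ n)) : (z == 0 :> nat) ->
  hadamard n *m delta_mx z z *m hadamard n = plus_state (2 ^ n) :> 'M[C]_(_).
Proof.
move=> z0; apply/matrixP => k l.
rewrite mulmx_delta_entry !hadamard_border ?z0 ?orbT // !mxE mulr1.
by rewrite -exprMn -invfM -expr2 sqrtCK natrX exprVn.
Qed.

Lemma dephase_first_tensmx a k (A : 'M[C]_a) (B : 'M[C]_k) :
  dephase_first (tensmx A B) = tensmx (dephase A) B.
Proof.
apply/matrixP => i j.
case: (mxtens_indexP i) => i1 i2; case: (mxtens_indexP j) => j1 j2.
by rewrite !mxE !mxtens_indexK /=; case: eqP => // _; rewrite mul0r.
Qed.

Lemma dephase_delta_mx d (i : 'I_d) :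
  dephase (delta_mx i i) = delta_mx i i :> 'M[C]_d.
Proof.
apply/matrixP => k l; rewrite !mxE; case: eqP => // /eqP kl.
by case: eqP => // ki; case: eqP => // li; rewrite ki li eqxx in kl.
Qed.

Lemma dephase_is_diag d (A : 'M[C]_d) : is_diag_mx (dephase A).
Proof. by apply/is_diag_mxP => i j ij; rewrite mxE -val_eqE (negbTE ij). Qed.

Lemma psdmx_gram p d (B : 'M[C]_(p, d)) : psdmx (dagger B *m B).
Proof.
split.
  apply/is_hermitianmxP; rewrite expr0 scale1r !daggerE.
  by rewrite trmx_mul map_mxM trmxCK.
move=> v; rewrite !daggerE -dotmxE mulmxA dotmx_mulmx_adj.
by rewrite dotmxE mxE sumr_ge0 // => k _; rewrite !mxE mul_conjC_ge0.
Qed.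

Lemma is_state_delta_mx d (i : 'I_d) : is_state (delta_mx i i : 'M[C]_d).
Proof.
have adj_basis : dagger (delta_mx 0 i : 'rV[C]_d) = delta_mx i 0.
  by apply/matrixP => k l; rewrite /dagger !mxE rmorph_nat andbC.
split; last exact: mxtrace_delta_mx.
by rewrite -(mul_delta_mx (0 : 'I_1)) -adj_basis; exact: psdmx_gram.
Qed.

End Qubits.

Theorem lemma8 (C : numClosedFieldType) (n m : nat)
  (E : 'M[C]_(2 ^ n * m) -> 'M[C]_(2 ^ n)) :
  is_channel E ->
  (forall X : 'M[C]_(2 ^ n * m), E (dephase_first X) = dephase (E X)) ->
  forall tau : 'M[C]_m, is_state tau ->
  exists rho : 'M[C]_(2 ^ n), is_state rho /\
    1 - ((2 ^ n)%:R)^-1 <=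
      trace_dist (E (tensmx rho tau)) (hadamard n *m rho *m hadamard n).
Proof.
move=> [_ [_ E_trace]] E_dephase tau [_ tr_tau].
have dim_gt0 : (0 < 2 ^ n)%N by rewrite expn_gt0.
pose z : 'I_(2 ^ n) := Ordinal dim_gt0.
exists (delta_mx z z); split; first exact: is_state_delta_mx.
rewrite hadamard_conj_basis0 //; apply: (trace_dist_diag_plus_state dim_gt0).
  by rewrite -dephase_delta_mx -dephase_first_tensmx E_dephase dephase_is_diag.
by rewrite E_trace mxtrace_tensmx mxtrace_delta_mx tr_tau mulr1.
Qed.
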